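(* Let $n$ be odd, let $k$ be a positive integer with $\gcd(k,n)=1$, let $L=GF(2^n)$, and let $t\in\{2,3\}$. For all $a\in L$ and $b,c\in L^*$, $$F^w(a,b,c)=\sum_{x\in L}(-1)^{\mathrm{Tr}\left(ax+bx^{2^k+1}+cx^{2^{tk}+1}\right)}\in\left\{0,\ \pm2^{\frac{n+1}{2}},\ \pm 2^{\frac{n+3}{2}}\right\}.$$
   Context: $\mathrm{Tr}$ denotes the absolute trace from $GF(2^n)$ to $GF(2)$, $\mathrm{Tr}(x)=\sum_{i=0}^{n-1}x^{2^i}$; $L^*=L\setminus\{0\}$. *)

From HB Require Import structures.
From mathcomp Require Import all_boot all_order all_algebra all_field.
Set Implicit Arguments. Unset Strict Implicit. Unset Printing Implicit Defensive.
Import GRing.Theory.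
Local Open Scope ring_scope.

(* Absolute trace GF(2^n) -> GF(2): Tr(x) = sum_{i<n} x^(2^i), an element of L
   (it lies in the prime field {0,1}). *)
Definition absTr (L : finFieldType) (n : nat) (x : L) : L :=
  \sum_(i < n) x ^+ (2 ^ i)%N.

(* (-1)^(Tr x) as an integer: Tr x is 0 or 1 in GF(2). *)
Definition trSign (L : finFieldType) (n : nat) (x : L) : int :=
  if absTr n x == 0 then 1 else -1.

Definition Fw (L : finFieldType) (n k t : nat) (a b c : L) : int :=
  \sum_(x : L) trSign n (a * x + b * x ^+ (2 ^ k + 1)%N + c * x ^+ (2 ^ (t * k) + 1)%N).

From mathcomp Require Import all_boot all_order all_algebra all_field all_fingroup.
From mathcomp Require Import zify ring.
Import GRing.Theory Num.Theory.
Local Open Scope ring_scope.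

(* Write chi(y) = (-1)^Tr(y) and Q(x) = a x + b x^(2^k+1) + c x^(2^s+1), s = tk.
   1. Frobenius powers x^(2^j) are additive and multiplicative and depend only
      on j mod n; the trace is Frobenius invariant, {0,1}-valued and onto, so
      chi is a nontrivial additive character and sum_x chi(r x) = 2^n [r = 0].
   2. Q is quadratic: Tr Q(x+u) = Tr Q(x) + Tr Q(u) + Tr(x R(u)) for an
      additive R.  Hence F^2 = 2^n sum_(u in ker R) chi(Q u), and since chi o Q
      is a character on ker R this last sum is 0 or #|ker R| = 2^r.
   3. Applying a suitable Frobenius power to R(u) = 0 turns it into a
      linearized polynomial in u^(2^j) with gcd(j, n) = 1 (j = k of degree 4
      for t = 2, j = 2k of degree 3 for t = 3).  Such a polynomial of degree d
      has at most 2^d roots, by factoring out a root with Abel summation; so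
      r <= 4.
   4. F^2 = 2^(n+r) with n odd forces r in {1, 3}, which gives the values. *)

Set Implicit Arguments. Unset Strict Implicit.

Section Frobenius.
Variables (L : finFieldType) (n : nat).
Hypothesis ch2 : 2 \in [pchar L].
Hypothesis hL : #|L| = (2 ^ n)%N.

Definition frob (j : nat) (x : L) : L := x ^+ (2 ^ j).

Lemma frob0n x : frob 0 x = x.
Proof. exact: expr1. Qed.

Lemma frob_comp i j x : frob i (frob j x) = frob (j + i) x.
Proof. by rewrite /frob -exprM -expnD. Qed.

Lemma frobD j : {morph frob j : x y / x + y}.
Proof.
move=> x y; apply: exprDn_pchar.
by rewrite (eq_pnat _ (pcharf_eq ch2)) pnatX pnat_id.
Qed.

Lemma frobM j : {morph frob j : x y / x * y}.
Proof. by move=> x y; rewrite /frob exprMn. Qed.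

Lemma frob0 j : frob j 0 = 0.
Proof. by rewrite /frob expr0n expn_eq0. Qed.

Lemma frob_eq0 j x : (frob j x == 0) = (x == 0).
Proof. by rewrite /frob expf_eq0 expn_gt0. Qed.

Lemma frobN j x : frob j (- x) = - frob j x.
Proof. by rewrite !(oppr_pchar2 ch2). Qed.

Lemma frobB j x y : frob j (x - y) = frob j x - frob j y.
Proof. by rewrite frobD frobN. Qed.

Lemma frob_sum j (I : Type) (r : seq I) (P : pred I) (F : I -> L) :
  frob j (\sum_(i <- r | P i) F i) = \sum_(i <- r | P i) frob j (F i).
Proof. exact: (big_morph _ (frobD j) (frob0 j)). Qed.

(* Since #|L| = 2^n, frob n is the identity, so indices only matter mod n. *)
Lemma frob_period j m x : frob (j + n * m) x = frob j x.
Proof.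
rewrite -frob_comp; elim: m => [|m IH]; first by rewrite muln0 frob0n.
by rewrite mulnS addnC -frob_comp IH /frob -hL expf_card.
Qed.

(* frob (n * j - j) is the inverse of frob j; composed with frob s, s >= j, it
   gives frob (s - j). *)
Lemma frobK j s : (0 < n)%N -> (j <= s)%N ->
  forall x, frob s (frob (n * j - j) x) = frob (s - j) x.
Proof.
move=> n_gt0 ljs x; rewrite -{1}(subnK ljs) addnC -frob_comp [frob j _]frob_comp.
by rewrite subnK ?leq_pmull // -[(n * j)%N]add0n frob_period frob0n.
Qed.

End Frobenius.

Section FrobeniusFixed.
Variables (L : finFieldType) (n : nat).
Hypothesis hL : #|L| = (2 ^ n)%N.
Hypothesis n_gt0 : (0 < n)%N.

(* For j coprime to n the only fixed points of x |-> x^(2^j) are 0 and 1: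
   some multiple j*a is -1 mod n, so a fixed point also satisfies y^2 = y. *)
Lemma frob_fixed j (y : L) : coprime j n -> frob j y = y -> y = 0 \/ y = 1.
Proof.
move=> cop_jn fix_y.
have [a _ /dvdnP [l def_ja]] := Bezoutr j n_gt0; rewrite (eqP cop_jn) in def_ja.
have fix_ja : frob (j * a) y = y.
  elim: a {def_ja} => [|a IH]; first by rewrite muln0 frob0n.
  by rewrite mulnS addnC -frob_comp IH fix_y.
have idem_y : y ^+ 2 = y.
  rewrite -[y ^+ 2]/(frob 1 y) -{1}fix_ja frob_comp addnC mulnC def_ja mulnC.
  by rewrite -[(n * l)%N]add0n (frob_period hL) frob0n.
have : y * (y - 1) == 0 by rewrite mulrBr mulr1 -expr2 idem_y subrr.
by rewrite mulf_eq0 subr_eq0 => /orP [] /eqP ->; [left | right].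
Qed.

End FrobeniusFixed.

Section Trace.
Variables (L : finFieldType) (n : nat).
Hypothesis ch2 : 2 \in [pchar L].
Hypothesis hL : #|L| = (2 ^ n)%N.
Hypothesis n_gt0 : (0 < n)%N.

Local Notation Tr := (@absTr L n).
Local Notation chi := (@trSign L n).

Lemma absTrE x : Tr x = \sum_(i < n) frob i x.
Proof. by []. Qed.

Lemma absTrD x y : Tr (x + y) = Tr x + Tr y.
Proof. by rewrite !absTrE -big_split; apply: eq_bigr => i _; rewrite (frobD ch2). Qed.

(* The trace is invariant under the Frobenius map: frob 1 permutes its summands
   cyclically, since frob n is the identity. *)
Lemma absTr_frob1 x : Tr (frob 1 x) = Tr x.
Proof.
rewrite !absTrE; case: n n_gt0 hL => // m _ hLm.
rewrite big_ord_recr [in RHS]big_ord_recl /= frob0n frob_comp add1n.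
rewrite -[m.+1]add0n -[m.+1]muln1 (frob_period hLm) frob0n addrC.
by congr (_ + _); apply: eq_bigr => i _; rewrite frob_comp.
Qed.

Lemma absTr_frob j x : Tr (frob j x) = Tr x.
Proof.
elim: j => [|j IH]; first by rewrite frob0n.
by rewrite -addn1 -frob_comp absTr_frob1 IH.
Qed.

Lemma absTr01 x : Tr x = 0 \/ Tr x = 1.
Proof.
have idem : Tr x ^+ 2 = Tr x.
  rewrite -[_ ^+ 2]/(frob 1 (Tr x)) -{2}absTr_frob1 !absTrE (frob_sum ch2).
  by apply: eq_bigr => i _; rewrite !frob_comp addnC.
have : Tr x * (Tr x - 1) == 0 by rewrite mulrBr mulr1 -expr2 idem subrr.
by rewrite mulf_eq0 subr_eq0 => /orP [] /eqP ->; [left | right].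
Qed.

(* The trace is not identically zero: it is a polynomial function of degree
   2^(n-1) < #|L|, so it cannot vanish on all of L. *)
Lemma absTr_onto : exists x0, Tr x0 = 1.
Proof.
have [x0 Tr_x0 | Tr0] := pickP (fun x => Tr x != 0).
  by exists x0; case: (absTr01 x0) Tr_x0 => ->; rewrite ?eqxx.
have [m def_n] : exists m, n = m.+1 by exists n.-1; rewrite prednK.
pose P : {poly L} := \sum_(i < n) 'X^(2 ^ i).
have P_Tr x : P.[x] = Tr x.
  by rewrite horner_sum; apply: eq_bigr => i _; rewrite hornerXn.
have size_P : size P = (2 ^ m).+1.
  rewrite /P def_n big_ord_recr /= addrC size_polyDl size_polyXn //.
  apply: leq_ltn_trans (size_sum _ _ _) _; rewrite ltnS.
  by apply/bigmax_leqP => i _; rewrite size_polyXn ltn_exp2l.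
have nz_P : P != 0 by rewrite -size_poly_eq0 size_P.
suff all_roots : all (root P) (enum L).
  have := max_poly_roots nz_P all_roots (enum_uniq L).
  by rewrite -cardE hL size_P def_n expnS ltnS leqNgt ltn_Pmull ?expn_gt0.
by apply/allP => x _; rewrite /root P_Tr; move/negbFE: (Tr0 x).
Qed.

Lemma trSignE x : chi x = if Tr x == 0 then 1 else -1.
Proof. by []. Qed.

Lemma trSignD x y : chi (x + y) = chi x * chi y.
Proof.
have two0 : (1 : L) + 1 = 0 by rewrite (addrr_pchar2 ch2).
rewrite !trSignE absTrD.
by case: (absTr01 x) => ->; case: (absTr01 y) => ->; rewrite ?addr0 ?add0r ?two0 ?eqxx ?oner_eq0.
Qed.

Lemma trSign_sq x : chi x * chi x = 1.
Proof. by rewrite trSignE; case: ifP; rewrite ?mulr1 ?mulrNN ?mulr1. Qed.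

Lemma trSign0 : chi 0 = 1.
Proof. by rewrite trSignE absTrE big1 ?eqxx // => i _; rewrite frob0. Qed.

Lemma trSign_pm x : chi x = 1 \/ chi x = -1.
Proof. by rewrite trSignE; case: ifP; [left | right]. Qed.

(* The character is nontrivial, hence its values sum to zero: translating by
   a point of trace 1 negates every term. *)
Lemma sum_trSign : \sum_(x : L) chi x = 0.
Proof.
have [x0 Tr_x0] := absTr_onto.
apply/eqP; rewrite -eqNr -sumrN; apply/eqP.
rewrite [RHS](reindex_inj (addIr x0)) /=; apply: eq_bigr => x _.
by rewrite trSignD (trSignE x0) Tr_x0 oner_eq0 mulrN1.
Qed.

Lemma sum_trSign_mul r : \sum_(x : L) chi (x * r) = if r == 0 then (2 ^ n)%:R else 0.
Proof.
have [-> | nz_r] := eqVneq r 0.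
  by under eq_bigr do rewrite mulr0 trSign0; rewrite sumr_const hL.
by rewrite -[RHS]sum_trSign [RHS](reindex_inj (mulIf nz_r)).
Qed.

End Trace.

Section QuadraticWalsh.
Variables (L : finFieldType) (n : nat).
Hypothesis ch2 : 2 \in [pchar L].
Hypothesis hL : #|L| = (2 ^ n)%N.
Hypothesis n_gt0 : (0 < n)%N.

Local Notation Tr := (@absTr L n).
Local Notation chi := (@trSign L n).

Variables (Q R : L -> L).
Hypothesis R_add : {morph R : x y / x + y}.
Hypothesis Q_polar :
  forall x u, Tr (Q (x + u)) = Tr (Q x) + Tr (Q u) + Tr (x * R u).

Definition radical : {set L} := [set u | R u == 0].

Lemma radical0 : R 0 = 0.
Proof. by apply: (addrI (R 0)); rewrite -R_add !addr0. Qed.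

Lemma trSign_polar x u : chi (Q (x + u)) = chi (Q x) * chi (Q u) * chi (x * R u).
Proof.
rewrite -!(trSignD ch2 hL n_gt0).
by rewrite !trSignE Q_polar !(absTrD n ch2).
Qed.

(* Squaring the Walsh sum and substituting y = x + u leaves only the u in the
   radical, by orthogonality of the character. *)
Lemma walsh_sq :
  (\sum_x chi (Q x)) ^+ 2 = (2 ^ n)%:Z * \sum_(u in radical) chi (Q u).
Proof.
rewrite expr2 mulr_suml.
transitivity (\sum_x \sum_u chi (Q u) * chi (x * R u)).
  apply: eq_bigr => x _; rewrite (reindex_inj (addrI x)) /= mulr_sumr.
  apply: eq_bigr => u _.
  by rewrite trSign_polar !mulrA (trSign_sq n) mul1r.
rewrite exchange_big /= mulr_sumr [RHS]big_mkcond /=; apply: eq_bigr => u _.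
rewrite -mulr_sumr (sum_trSign_mul ch2 hL n_gt0) inE.
by case: ifP => _; rewrite ?mulr0 // mulrC natz.
Qed.

(* On the radical, chi o Q is a +-1 valued additive character, so its sum is
   either 0 or the size of the radical. *)
Lemma sum_radical :
  \sum_(u in radical) chi (Q u) = 0 \/ \sum_(u in radical) chi (Q u) = #|radical|%:Z.
Proof.
have [w0 /andP [rad_w0 /eqP chi_w0] | chi_rad] :=
  pickP (fun u => (u \in radical) && (chi (Q u) == -1)).
  have Rw0 : R w0 = 0 by move: rad_w0; rewrite inE => /eqP.
  left; apply/eqP; rewrite -eqNr -sumrN; apply/eqP.
  rewrite [RHS](reindex_inj (addIr w0)) /=; apply: eq_big => u.
    by rewrite !inE R_add Rw0 addr0.
  by move=> _; rewrite trSign_polar chi_w0 Rw0 mulr0 (trSign0 L n) mulrN1 mulr1.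
right; rewrite -natz -sumr_const; apply: eq_bigr => u rad_u.
have [// | chi_u] := trSign_pm n (Q u).
by move: (chi_rad u); rewrite rad_u chi_u eqxx.
Qed.

(* The radical is a subgroup of the additive group of L, so by Lagrange its
   order divides 2^n and is a power of 2. *)
Lemma card_radical : exists r, #|radical| = (2 ^ r)%N.
Proof.
have rad_group : group_set radical.
  apply/group_setP; split; first by rewrite inE FinRing.Theory.zmod1gE radical0.
  by move=> x y; rewrite !inE FinRing.Theory.zmodMgE R_add => /eqP -> /eqP ->; rewrite addr0.
have := cardSg (subsetT (Group rad_group)).
rewrite cardsT hL => /(dvdn_pfactor _ _ (isT : prime 2)) [r _ card_r].
by exists r.
Qed.

End QuadraticWalsh.

Lemma sum_by_parts (R : comNzRingType) (a Y : nat -> R) N :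
  \sum_(i < N.+1) a i * Y i =
  \sum_(s < N) (\sum_(i < s.+1) a i) * (Y s - Y s.+1) + (\sum_(i < N.+1) a i) * Y N.
Proof.
elim: N => [|N IH]; first by rewrite !big_ord1 big_ord0 add0r.
rewrite big_ord_recr /= IH [in RHS]big_ord_recr /= [in X in _ = _ + X * _]big_ord_recr /=.
by rewrite mulrBr mulrDl -!addrA addKr.
Qed.

Lemma card_preimset_le (T U : finType) (f : T -> U) (S : {set U}) m :
  (forall s, #|[set x | f x == s]| <= m)%N -> (#|f @^-1: S| <= m * #|S|)%N.
Proof.
move=> fiber_le; rewrite -sum1_card (partition_big f (mem S)) => [|x]; last by rewrite inE.
rewrite mulnC -sum_nat_const leq_sum // => s _; apply: leq_trans (fiber_le s).
by rewrite sum1dep_card; apply: subset_leq_card; apply/subsetP => x; rewrite !inE => /andP [].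
Qed.

Section LinearizedRoots.
Variables (L : finFieldType) (n : nat).
Hypothesis ch2 : 2 \in [pchar L].
Hypothesis hL : #|L| = (2 ^ n)%N.
Hypothesis n_gt0 : (0 < n)%N.
Variable j : nat.
Hypothesis cop_jn : coprime j n.

Definition linroots d (cf : nat -> L) : {set L} :=
  [set x | \sum_(i < d.+1) cf i * frob (j * i) x == 0].

(* The Artin-Schreier type map x |-> (x/v)^(2^j) - x/v; it is additive with
   kernel {0, v}, hence has fibers of size at most 2. *)
Definition asmap (v x : L) : L := frob j (x / v) - x / v.

Lemma asmapB v x y : asmap v (x - y) = asmap v x - asmap v y.
Proof. by rewrite /asmap mulrBl (frobB ch2); ring. Qed.

Lemma card_asmap_fiber v s : v != 0 -> (#|[set x | asmap v x == s]| <= 2)%N.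
Proof.
move=> nz_v; have [x0 fib_x0 | empty_fib] := pickP [in [set x | asmap v x == s]]; last first.
  by rewrite (eq_card0 empty_fib).
apply: leq_trans (subset_leq_card (_ : _ \subset [set x0; x0 + v])) _; last first.
  by rewrite cards2; case: eqP.
apply/subsetP => x; rewrite inE in fib_x0; rewrite !inE -(eqP fib_x0) => /eqP eq_x.
have : frob j ((x - x0) / v) = (x - x0) / v.
  by apply/eqP; rewrite -subr_eq0 -[_ - _]/(asmap v (x - x0)) asmapB eq_x subrr.
move/(frob_fixed hL n_gt0 cop_jn) => [/eqP | quot1].
  by rewrite mulf_eq0 invr_eq0 (negbTE nz_v) orbF subr_eq0 => ->.
have /eqP : x - x0 = v by rewrite -(divfK nz_v (x - x0)) quot1 mul1r.
by rewrite subr_eq addrC => ->; rewrite orbT.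
Qed.

(* Factoring out a nonzero root v by Abel summation: if v is a root of the
   degree d+1 polynomial with coefficients cf, then evaluating it at v y gives a
   degree d polynomial, with coefficients e, evaluated at y^(2^j) - y. *)
Definition quotient_coef (cf : nat -> L) (v : L) (s : nat) : L :=
  - \sum_(i < s.+1) cf i * frob (j * i) v.

Lemma linroots_factor d cf v y : v \in linroots d.+1 cf ->
  \sum_(i < d.+2) cf i * frob (j * i) (v * y) =
  \sum_(s < d.+1) quotient_coef cf v s * frob (j * s) (frob j y - y).
Proof.
rewrite inE => /eqP root_v.
under eq_bigr do rewrite frobM mulrA.
rewrite (sum_by_parts (fun i => cf i * frob (j * i) v) (fun i => frob (j * i) y)) /=.
rewrite root_v mul0r addr0.
apply: eq_bigr => s _.
by rewrite (frobB ch2) frob_comp -mulnS /quotient_coef mulNr -mulrN opprB.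
Qed.

Lemma card_linroots d cf : cf d != 0 -> (#|linroots d cf| <= 2 ^ d)%N.
Proof.
elim: d cf => [|d IH] cf nz_cf.
  rewrite expn0 -(cards1 (0 : L)); apply: subset_leq_card; apply/subsetP => x.
  by rewrite !inE big_ord1 muln0 frob0n mulf_eq0 (negbTE nz_cf).
have [v /andP [root_v nz_v] | no_root] :=
  pickP [pred x | (x \in linroots d.+1 cf) && (x != 0)]; last first.
  apply: (@leq_trans #|[set 0 : L]|); last by rewrite cards1 expn_gt0.
  apply: subset_leq_card; apply/subsetP => x root_x; rewrite inE.
  by move: (no_root x); rewrite /= root_x => /negbFE.
have nz_e : quotient_coef cf v d != 0.
  move: root_v; rewrite inE big_ord_recr /= addrC addr_eq0 /quotient_coef => /eqP <-.
  by rewrite mulf_neq0 // frob_eq0.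
apply: (@leq_trans #|asmap v @^-1: linroots d (quotient_coef cf v)|).
  apply: subset_leq_card; apply/subsetP => x root_x; rewrite !inE /asmap.
  by rewrite -linroots_factor // mulrC divfK //; move: root_x; rewrite inE.
rewrite expnS; apply: leq_trans (card_preimset_le _ (fun s => card_asmap_fiber s nz_v)) _.
by rewrite leq_mul2l IH.
Qed.

End LinearizedRoots.

Section Polarization.
Variables (L : finFieldType) (n : nat).
Hypothesis ch2 : 2 \in [pchar L].
Hypothesis hL : #|L| = (2 ^ n)%N.
Hypothesis n_gt0 : (0 < n)%N.

Local Notation Tr := (@absTr L n).

(* The polarization of x |-> Tr(b x^(2^j+1)) is Tr(x polar_j(b, u)), where
   polar_j(b, u) = (b u)^(2^-j) + b u^(2^j) is additive in u. *)
Definition polar j (b u : L) : L := frob (n * j - j) (b * u) + b * frob j u.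

Lemma polarD j b : {morph polar j b : x y / x + y}.
Proof. by move=> x y; rewrite /polar mulrDr !(frobD ch2) mulrDr addrACA. Qed.

Lemma absTr_monomial_polar j b x u :
  Tr (b * (x + u) ^+ (2 ^ j + 1)) =
  Tr (b * x ^+ (2 ^ j + 1)) + Tr (b * u ^+ (2 ^ j + 1)) + Tr (x * polar j b u).
Proof.
have frob_exp (y : L) : y ^+ (2 ^ j + 1) = frob j y * y by rewrite exprD expr1.
have frob_inv (y : L) : frob (n * j - j) (frob j y) = y.
  by rewrite frob_comp subnKC ?leq_pmull // -[(n * j)%N]add0n (frob_period hL) frob0n.
have cross : Tr (b * frob j x * u) = Tr (x * frob (n * j - j) (b * u)).
  rewrite -(absTr_frob hL n_gt0 (n * j - j)) !frobM frob_inv.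
  by rewrite [_ * x]mulrC -mulrA.
rewrite !frob_exp (frobD ch2) !mulrDl !mulrDr /polar !(absTrD n ch2) !mulrA cross.
by rewrite [b * frob j u * x]mulrC !mulrA; ring.
Qed.

End Polarization.

Section TwoGoldTerms.
Variables (L : finFieldType) (n : nat).
Hypothesis ch2 : 2 \in [pchar L].
Hypothesis hL : #|L| = (2 ^ n)%N.
Hypothesis n_gt0 : (0 < n)%N.
Variables (k s : nat) (a b c : L).

Definition goldQ (x : L) : L := a * x + b * x ^+ (2 ^ k + 1) + c * x ^+ (2 ^ s + 1).
Definition goldR (u : L) : L := polar n k b u + polar n s c u.

Lemma goldR_add : {morph goldR : x y / x + y}.
Proof. by move=> x y; rewrite /goldR !(polarD n ch2) addrACA. Qed.

Lemma goldQ_polar x u : absTr n (goldQ (x + u)) =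
  absTr n (goldQ x) + absTr n (goldQ u) + absTr n (x * goldR u).
Proof.
rewrite /goldQ /goldR !(absTrD n ch2) !(absTr_monomial_polar ch2 hL n_gt0).
rewrite (mulrDr a x) (mulrDr x (polar n k b u)).
by rewrite (absTrD n ch2 (a * x)) (absTrD n ch2 (x * polar n k b u)); ring.
Qed.

(* For s = 2k, applying x |-> x^(2^(2k)) to goldR u gives a linearized
   polynomial of degree 4 in u |-> u^(2^k). *)
Definition coef_t2 (i : nat) : L :=
  nth 0 [:: c; frob k b; 0; frob (2 * k) b; frob (2 * k) c] i.

Lemma frob_goldR_t2 u : s = (2 * k)%N ->
  frob s (goldR u) = \sum_(i < 5) coef_t2 i * frob (k * i) u.
Proof.
move=> def_s; rewrite /goldR /polar def_s !(frobD ch2) !frobM.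
rewrite !(frobK hL n_gt0) ?leq_pmull // !frob_comp subnn.
rewrite !big_ord_recr big_ord0 /= /coef_t2 /= mul0r addr0 add0r muln0 muln1 !frob0n.
have -> : (2 * k - k = k)%N by lia.
have -> : (k + 2 * k = k * 3)%N by lia.
have -> : (2 * k + 2 * k = k * 4)%N by lia.
by ring.
Qed.

(* For s = 3k, applying x |-> x^(2^(3k)) to goldR u gives a linearized
   polynomial of degree 3 in u |-> u^(2^(2k)). *)
Definition coef_t3 (i : nat) : L :=
  nth 0 [:: c; frob (2 * k) b; frob (3 * k) b; frob (3 * k) c] i.

Lemma frob_goldR_t3 u : s = (3 * k)%N ->
  frob s (goldR u) = \sum_(i < 4) coef_t3 i * frob (2 * k * i) u.
Proof.
move=> def_s; rewrite /goldR /polar def_s !(frobD ch2) !frobM.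
rewrite !(frobK hL n_gt0) ?leq_pmull // !frob_comp subnn.
rewrite !big_ord_recr big_ord0 /= /coef_t3 /= add0r muln0 muln1 !frob0n.
have -> : (3 * k - k = 2 * k)%N by lia.
have -> : (k + 3 * k = 2 * k * 2)%N by lia.
have -> : (3 * k + 3 * k = 2 * k * 3)%N by lia.
by ring.
Qed.

Lemma card_radical_goldR : coprime k n -> odd n -> c != 0 ->
  s = (2 * k)%N \/ s = (3 * k)%N -> (#|radical goldR| <= 2 ^ 4)%N.
Proof.
move=> cop_kn odd_n nz_c [def_s | def_s].
  have nz_lead : coef_t2 4 != 0 by rewrite /coef_t2 /= frob_eq0.
  have sub_roots : radical goldR \subset linroots k 4 coef_t2.
    apply/subsetP => u; rewrite !inE => /eqP goldR_u.
    by rewrite -(frob_goldR_t2 u def_s) goldR_u frob0.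
  exact: leq_trans (subset_leq_card sub_roots) (card_linroots ch2 hL n_gt0 cop_kn nz_lead).
have cop_2kn : coprime (2 * k) n by rewrite coprimeMl cop_kn coprime2n odd_n.
have nz_lead : coef_t3 3 != 0 by rewrite /coef_t3 /= frob_eq0.
have sub_roots : radical goldR \subset linroots (2 * k) 3 coef_t3.
  apply/subsetP => u; rewrite !inE => /eqP goldR_u.
  by rewrite -(frob_goldR_t3 u def_s) goldR_u frob0.
apply: leq_trans (subset_leq_card sub_roots) _.
exact: leq_trans (card_linroots ch2 hL n_gt0 cop_2kn nz_lead) _.
Qed.

End TwoGoldTerms.

Lemma sqr_int_pow2 (F : int) e : F ^+ 2 = (2 ^ e)%:Z ->
  ~~ odd e /\ (F = (2 ^ e./2)%:Z \/ F = - (2 ^ e./2)%:Z).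
Proof.
move=> sqF.
have abs_sq : (`|F| ^ 2 = 2 ^ e)%N by rewrite -abszX sqF absz_nat.
have nz_F : (0 < `|F|)%N.
  by rewrite lt0n; apply: contra_eqN abs_sq => /eqP ->; rewrite eq_sym expn_eq0.
have def_e : e = (logn 2 `|F|).*2 by rewrite -(pfactorK e (isT : prime 2)) -abs_sq lognX mul2n.
split; first by rewrite def_e odd_double.
suff : (F == (2 ^ e./2)%:Z) || (F == - (2 ^ e./2)%:Z).
  by case/orP => /eqP; [left | right].
by rewrite -eqf_sqr sqF -!natz -natrX -expnM muln2 {2}def_e doubleK -def_e.
Qed.

Lemma walsh_values (F : int) n r : odd n -> (r <= 4)%N ->
  F ^+ 2 = 0 \/ F ^+ 2 = (2 ^ (n + r))%:Z ->
  F \in [:: 0; (2 ^ n.+1./2)%:Z; - (2 ^ n.+1./2)%:Z;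
            (2 ^ n.+3./2)%:Z; - (2 ^ n.+3./2)%:Z].
Proof.
move=> odd_n r_le4 [/eqP | /sqr_int_pow2 [even_nr F_pm]].
  by rewrite expf_eq0 => /andP [_ /eqP ->]; rewrite inE eqxx.
have [r1 | r3] : r = 1%N \/ r = 3%N.
  by clear F_pm; move: even_nr; rewrite oddD odd_n; case: r r_le4 => [|[|[|[|[|]]]]]; auto.
  by move: F_pm; rewrite r1 addn1 !inE => [] [] ->; rewrite eqxx ?orbT.
by move: F_pm; rewrite r3 addn3 !inE => [] [] ->; rewrite eqxx ?orbT.
Qed.

Unset Implicit Arguments. Set Strict Implicit.

Theorem mainTheorem2 (L : finFieldType) (n k t : nat)
  (hn : odd n) (hk : (0 < k)%N) (hkn : coprime k n)
  (hL : #|L| = (2 ^ n)%N) (ht : t = 2%N \/ t = 3%N)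
  (a b c : L) (hb : b != 0) (hc : c != 0) :
  Fw n k t a b c \in
    [:: 0; (2 ^ n.+1./2)%:Z; - (2 ^ n.+1./2)%:Z;
            (2 ^ n.+3./2)%:Z; - (2 ^ n.+3./2)%:Z].
Proof.
have n_gt0 : (0 < n)%N by rewrite lt0n; apply: contraTneq hn => ->.
have ch2 : 2 \in [pchar L] := card_finPcharP hL (isT : prime 2).
pose R := goldR n k (t * k) b c.
have R_add : {morph R : x y / x + y} := goldR_add n ch2 k (t * k) b c.
have Q_polar := goldQ_polar ch2 hL n_gt0 k (t * k) a b c.
have walsh : Fw n k t a b c ^+ 2 =
    (2 ^ n)%:Z * \sum_(u in radical R) trSign n (goldQ k (t * k) a b c u) :=
  walsh_sq ch2 hL n_gt0 Q_polar.
have [r card_r] := card_radical hL R_add.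
have r_le4 : (r <= 4)%N.
  rewrite -(leq_exp2l _ _ (isT : (1 < 2)%N)) -card_r.
  by apply: card_radical_goldR => //; case: ht => ->; [left | right].
apply: (walsh_values hn r_le4); rewrite walsh.
have [-> | ->] := sum_radical ch2 hL n_gt0 R_add Q_polar.
  by left; rewrite mulr0.
by right; rewrite card_r -PoszM -expnD.
Qed.
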